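(* Let $\varphi=\nu\tilde n.\sigma$ be a frame that is well-formed with respect to a name $\mathtt{s}$, where $\mathtt{s}\in\tilde n$ is a restricted name of $\varphi$. Then $\varphi\nvdash \mathtt{s}$ if and only if $\varphi[\mathtt{s}/M]\approx \varphi[\mathtt{s}/M']$ for all closed terms $M,M'$ that are public with respect to $\varphi$.
   Context: Terms are built over the signature $\Sigma$ consisting of $\mathsf{enc}$ (arity 3), $\mathsf{dec}$ (2), $\mathsf{enca}$ (3), $\mathsf{deca}$ (2), $\mathsf{pub}$ (1), $\mathsf{priv}$ (1), pairing $\langle\cdot,\cdot\rangle$ (2), $\pi_1,\pi_2$ (1), $\mathsf{sign}$ (2), $\mathsf{check}$ (3), $\mathsf{retrieve}$ (1), together with a set of constants (including $\mathsf{ok}$), an infinite set $\mathcal N$ of names and an infinite set $\mathcal X$ of variables. Constructors are $\langle\rangle,\mathsf{enc},\mathsf{enca},\mathsf{sign}$; destructors are $\pi_1,\pi_2,\mathsf{dec},\mathsf{deca},\mathsf{check},\mathsf{retrieve}$. $\mathrm{fn}(T)$ is the set of names of $T$; a term is closed (ground) if it has no variables. Positions are finite sequences of positive integers ($\epsilon$ the root), $T|_p$ is the subterm at $p$. The equational theory $E$ is generated by $\pi_1(\langle z_1,z_2\rangle)=z_1$, $\pi_2(\langle z_1,z_2\rangle)=z_2$, $\mathsf{dec}(\mathsf{enc}(z_1,z_2,z_3),z_2)=z_1$, $\mathsf{deca}(\mathsf{enca}(z_1,\mathsf{pub}(z_2),z_3),\mathsf{priv}(z_2))=z_1$, $\mathsf{check}(z_1,\mathsf{sign}(z_1,\mathsf{priv}(z_2)),\mathsf{pub}(z_2))=\mathsf{ok}$,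 $\mathsf{retrieve}(\mathsf{sign}(z_1,z_2))=z_1$; $=_E$ is the induced equality. A frame $\varphi=\nu\tilde n.\sigma$ consists of a finite set $\tilde n$ of (restricted) names and an acyclic substitution $\sigma=\{y_1\mapsto M_1,\dots,y_l\mapsto M_l\}$; $\mathrm{dom}(\varphi)=\{y_1,\dots,y_l\}$, $\mathrm{ran}(\sigma)=\{M_1,\dots,M_l\}$. A term is public w.r.t. $\varphi$ (or w.r.t. $\tilde n$) if it contains no name of $\tilde n$ and no symbol $\mathsf{priv}$. Deducibility $\varphi\vdash M$ is the smallest relation such that $\varphi\vdash x\sigma$ for $x\in\mathrm{dom}(\sigma)$, $\varphi\vdash m$ for every name $m\notin\tilde n$, if $\varphi\vdash T_1,\dots,\varphi\vdash T_k$ then $\varphi\vdash f(T_1,\dots,T_k)$ for every $f\neq\mathsf{priv}$ of arity $k$, and if $\varphi\vdash T$ and $T=_E T'$ then $\varphi\vdash T'$. For $\mathtt{s}\in\tilde n$ and $M$ with $\mathrm{fn}(M)\cap\tilde n=\emptyset$, $\varphi[\mathtt{s}/M]=\nu\tilde n.\sigma[\mathtt{s}/M]$ replaces every occurrence of $\mathtt{s}$ in the terms of $\sigma$ by $M$. A frame $\nu\tilde n.\sigma$ passes the test $(U,V)$ if, after renaming the names of $\tilde n$ so that none occurs in $U$ or $V$, $U\sigma=_E V\sigma$. Two frames $\varphi,\varphi'$ are statically equivalent, $\varphi\approx\varphi'$, if $\mathrm{dom}(\varphi)=\mathrm{dom}(\varphi')$ and for all terms $U,V$ public w.r.t. both frames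 with variables in $\mathrm{dom}(\varphi)$, $\varphi$ passes $(U,V)$ iff $\varphi'$ passes $(U,V)$. An encryption (occurrence) in a term $U$ is a position $q$ with head symbol of $U|_q$ in $\{\mathsf{enc},\mathsf{enca}\}$. It is an agent encryption w.r.t. a set of names $\tilde m$ if $U|_{q\cdot 3}\in\tilde m$. It is a probabilistic encryption w.r.t. a set of terms $S$ if for every $V\in S$ and position $p$ with $V|_p=U|_{q\cdot 3}$ we have $p=q'\cdot 3$ for some $q'$ with $V|_{q'}=U|_q$. A frame $\varphi=\nu\tilde n.\sigma$ is well-formed w.r.t. a name $\mathtt{s}$ if: (1) every encryption occurring in the terms of $\sigma$ is an agent encryption w.r.t. $\tilde n\setminus\{\mathtt{s}\}$ and a probabilistic encryption w.r.t. $\mathrm{ran}(\sigma)$; (2) for all subterms $\mathsf{enc}(M,K,R)$, $\mathsf{enca}(M',K',R')$, $\mathsf{sign}(U,V)$, $\mathsf{pub}(W)$, $\mathsf{priv}(W')$ of terms of $\varphi$, $\mathtt{s}\notin\mathrm{fn}(K,K',V,W,W',R,R')$; (3) $\varphi$ contains no destructor symbol. *)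

From Stdlib Require Import List Arith Relations.
Import ListNotations.

Inductive term : Type :=
| Var (x : nat)
| Name (n : nat)
| Cst (c : nat)
| Enc (t1 t2 t3 : term)
| Dec (t1 t2 : term)
| Enca (t1 t2 t3 : term)
| Deca (t1 t2 : term)
| Pub (t : term)
| Priv (t : term)
| Pair (t1 t2 : term)
| Proj1 (t : term)
| Proj2 (t : term)
| Sign (t1 t2 : term)
| Check (t1 t2 t3 : term)
| Retrieve (t : term).

Definition ok : term := Cst 0.

(** Arguments of the root symbol, in order (positions 1..k). *)
Definition args (t : term) : list term :=
  match t with
  | Var _ | Name _ | Cst _ => []
  | Enc a b c | Enca a b c | Check a b c => [a; b; c]
  | Dec a b | Deca a b | Pair a b | Sign a b => [a; b]
  | Pub a | Priv a | Proj1 a | Proj2 a | Retrieve a => [a]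
  end.

Fixpoint subterm_at (t : term) (p : list nat) : option term :=
  match p with
  | [] => Some t
  | i :: p' =>
      match i with
      | 0 => None
      | S j => match nth_error (args t) j with
               | Some u => subterm_at u p'
               | None => None
               end
      end
  end.

Definition is_subterm (u t : term) : Prop := exists p, subterm_at t p = Some u.

Fixpoint names (t : term) : list nat :=
  match t with
  | Var _ | Cst _ => []
  | Name n => [n]
  | Enc a b c | Enca a b c | Check a b c => names a ++ names b ++ names c
  | Dec a b | Deca a b | Pair a b | Sign a b => names a ++ names b
  | Pub a | Priv a | Proj1 a | Proj2 a | Retrieve a => names a
  end.

Fixpoint vars (t : term) : list nat :=
  match t with
  | Name _ | Cst _ => []
  | Var x => [x]
  | Enc a b c | Enca a b c | Check a b c => vars a ++ vars b ++ vars c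
  | Dec a b | Deca a b | Pair a b | Sign a b => vars a ++ vars b
  | Pub a | Priv a | Proj1 a | Proj2 a | Retrieve a => vars a
  end.

Fixpoint has_priv (t : term) : bool :=
  match t with
  | Var _ | Name _ | Cst _ => false
  | Priv _ => true
  | Enc a b c | Enca a b c | Check a b c => has_priv a || has_priv b || has_priv c
  | Dec a b | Deca a b | Pair a b | Sign a b => has_priv a || has_priv b
  | Pub a | Proj1 a | Proj2 a | Retrieve a => has_priv a
  end.

Definition closed (t : term) : Prop := vars t = [].

Definition public_wrt (nt : list nat) (t : term) : Prop :=
  (forall n, In n (names t) -> ~ In n nt) /\ has_priv t = false.

Definition is_destructor (t : term) : Prop :=
  match t with
  | Proj1 _ | Proj2 _ | Dec _ _ | Deca _ _ | Check _ _ _ | Retrieve _ => True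
  | _ => False
  end.

Inductive eqE : term -> term -> Prop :=
| eqE_refl t : eqE t t
| eqE_sym t u : eqE t u -> eqE u t
| eqE_trans t u v : eqE t u -> eqE u v -> eqE t v
| eqE_Enc a b c a' b' c' : eqE a a' -> eqE b b' -> eqE c c' -> eqE (Enc a b c) (Enc a' b' c')
| eqE_Dec a b a' b' : eqE a a' -> eqE b b' -> eqE (Dec a b) (Dec a' b')
| eqE_Enca a b c a' b' c' : eqE a a' -> eqE b b' -> eqE c c' -> eqE (Enca a b c) (Enca a' b' c')
| eqE_Deca a b a' b' : eqE a a' -> eqE b b' -> eqE (Deca a b) (Deca a' b')
| eqE_Pub a a' : eqE a a' -> eqE (Pub a) (Pub a')
| eqE_Priv a a' : eqE a a' -> eqE (Priv a) (Priv a')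
| eqE_Pair a b a' b' : eqE a a' -> eqE b b' -> eqE (Pair a b) (Pair a' b')
| eqE_Proj1 a a' : eqE a a' -> eqE (Proj1 a) (Proj1 a')
| eqE_Proj2 a a' : eqE a a' -> eqE (Proj2 a) (Proj2 a')
| eqE_Sign a b a' b' : eqE a a' -> eqE b b' -> eqE (Sign a b) (Sign a' b')
| eqE_Check a b c a' b' c' : eqE a a' -> eqE b b' -> eqE c c' -> eqE (Check a b c) (Check a' b' c')
| eqE_Retrieve a a' : eqE a a' -> eqE (Retrieve a) (Retrieve a')
| eqE_ax_proj1 z1 z2 : eqE (Proj1 (Pair z1 z2)) z1
| eqE_ax_proj2 z1 z2 : eqE (Proj2 (Pair z1 z2)) z2
| eqE_ax_dec z1 z2 z3 : eqE (Dec (Enc z1 z2 z3) z2) z1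
| eqE_ax_deca z1 z2 z3 : eqE (Deca (Enca z1 (Pub z2) z3) (Priv z2)) z1
| eqE_ax_check z1 z2 : eqE (Check z1 (Sign z1 (Priv z2)) (Pub z2)) ok
| eqE_ax_retrieve z1 z2 : eqE (Retrieve (Sign z1 z2)) z1.

Definition subst := list (nat * term).

Definition dom (s : subst) : list nat := map fst s.
Definition ran (s : subst) : list term := map snd s.

Fixpoint lookup (s : subst) (x : nat) : option term :=
  match s with
  | [] => None
  | (y, t) :: s' => if Nat.eqb x y then Some t else lookup s' x
  end.

Fixpoint subst1 (s : subst) (t : term) : term :=
  match t with
  | Var x => match lookup s x with Some u => u | None => Var x end
  | Name n => Name n
  | Cst c => Cst c
  | Enc a b c => Enc (subst1 s a) (subst1 s b) (subst1 s c)
  | Dec a b => Dec (subst1 s a) (subst1 s b)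
  | Enca a b c => Enca (subst1 s a) (subst1 s b) (subst1 s c)
  | Deca a b => Deca (subst1 s a) (subst1 s b)
  | Pub a => Pub (subst1 s a)
  | Priv a => Priv (subst1 s a)
  | Pair a b => Pair (subst1 s a) (subst1 s b)
  | Proj1 a => Proj1 (subst1 s a)
  | Proj2 a => Proj2 (subst1 s a)
  | Sign a b => Sign (subst1 s a) (subst1 s b)
  | Check a b c => Check (subst1 s a) (subst1 s b) (subst1 s c)
  | Retrieve a => Retrieve (subst1 s a)
  end.

Definition dep (s : subst) (y x : nat) : Prop :=
  In y (dom s) /\ exists t, lookup s x = Some t /\ In y (vars t).

Definition acyclic (s : subst) : Prop := forall x, ~ clos_trans nat (dep s) x x.

(** Application of an acyclic substitution (fully resolved): iterating
    |dom s| times reaches the fixpoint for acyclic s. *)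
Definition apply_subst (s : subst) (t : term) : term :=
  Nat.iter (length s) (subst1 s) t.

Record frame := Frame { fnames : list nat; fsubst : subst }.

Definition frame_ok (phi : frame) : Prop :=
  NoDup (dom (fsubst phi)) /\ acyclic (fsubst phi).

Definition fdom (phi : frame) : list nat := dom (fsubst phi).

Definition public (phi : frame) (t : term) : Prop := public_wrt (fnames phi) t.

Inductive deducible (phi : frame) : term -> Prop :=
| ded_var x : In x (fdom phi) -> deducible phi (apply_subst (fsubst phi) (Var x))
| ded_name m : ~ In m (fnames phi) -> deducible phi (Name m)
| ded_cst c : deducible phi (Cst c)
| ded_Enc a b c : deducible phi a -> deducible phi b -> deducible phi c -> deducible phi (Enc a b c)
| ded_Dec a b : deducible phi a -> deducible phi b -> deducible phi (Dec a b)
| ded_Enca a b c : deducible phi a -> deducible phi b -> deducible phi c -> deducible phi (Enca a b c)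
| ded_Deca a b : deducible phi a -> deducible phi b -> deducible phi (Deca a b)
| ded_Pub a : deducible phi a -> deducible phi (Pub a)
| ded_Pair a b : deducible phi a -> deducible phi b -> deducible phi (Pair a b)
| ded_Proj1 a : deducible phi a -> deducible phi (Proj1 a)
| ded_Proj2 a : deducible phi a -> deducible phi (Proj2 a)
| ded_Sign a b : deducible phi a -> deducible phi b -> deducible phi (Sign a b)
| ded_Check a b c : deducible phi a -> deducible phi b -> deducible phi c -> deducible phi (Check a b c)
| ded_Retrieve a : deducible phi a -> deducible phi (Retrieve a)
| ded_eq t t' : deducible phi t -> eqE t t' -> deducible phi t'.

Fixpoint repl (s : nat) (M t : term) : term :=
  match t with
  | Var x => Var x
  | Name n => if Nat.eqb n s then M else Name n
  | Cst c => Cst c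
  | Enc a b c => Enc (repl s M a) (repl s M b) (repl s M c)
  | Dec a b => Dec (repl s M a) (repl s M b)
  | Enca a b c => Enca (repl s M a) (repl s M b) (repl s M c)
  | Deca a b => Deca (repl s M a) (repl s M b)
  | Pub a => Pub (repl s M a)
  | Priv a => Priv (repl s M a)
  | Pair a b => Pair (repl s M a) (repl s M b)
  | Proj1 a => Proj1 (repl s M a)
  | Proj2 a => Proj2 (repl s M a)
  | Sign a b => Sign (repl s M a) (repl s M b)
  | Check a b c => Check (repl s M a) (repl s M b) (repl s M c)
  | Retrieve a => Retrieve (repl s M a)
  end.

Definition frame_repl (phi : frame) (s : nat) (M : term) : frame :=
  Frame (fnames phi) (map (fun p => (fst p, repl s M (snd p))) (fsubst phi)).

(* The test (U,V) is only ever applied to terms public w.r.t. the frame, which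
   contain no restricted name, so the renaming of restricted names is vacuous. *)
Definition passes (phi : frame) (U V : term) : Prop :=
  eqE (apply_subst (fsubst phi) U) (apply_subst (fsubst phi) V).

Definition stat_equiv (phi phi' : frame) : Prop :=
  (forall x, In x (fdom phi) <-> In x (fdom phi')) /\
  forall U V,
    public phi U -> public phi' U -> public phi V -> public phi' V ->
    (forall x, In x (vars U) -> In x (fdom phi)) ->
    (forall x, In x (vars V) -> In x (fdom phi)) ->
    (passes phi U V <-> passes phi' U V).

Definition is_encryption (t : term) : Prop :=
  match t with Enc _ _ _ | Enca _ _ _ => True | _ => False end.

Definition agent_encryption (mt : list nat) (U : term) (q : list nat) : Prop :=
  exists r, subterm_at U (q ++ [3]) = Some (Name r) /\ In r mt.

Definition probabilistic_encryption (S : list term) (U : term) (q : list nat) : Prop :=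
  forall R E, subterm_at U (q ++ [3]) = Some R -> subterm_at U q = Some E ->
  forall V p, In V S -> subterm_at V p = Some R ->
  exists q', p = q' ++ [3] /\ subterm_at V q' = Some E.

Definition key_condition (s : nat) (t : term) : Prop :=
  match t with
  | Enc _ k r | Enca _ k r => ~ In s (names k) /\ ~ In s (names r)
  | Sign _ v => ~ In s (names v)
  | Pub w | Priv w => ~ In s (names w)
  | _ => True
  end.

Definition well_formed (phi : frame) (s : nat) : Prop :=
  (forall U q E, In U (ran (fsubst phi)) -> subterm_at U q = Some E -> is_encryption E ->
     agent_encryption (remove Nat.eq_dec s (fnames phi)) U q /\
     probabilistic_encryption (ran (fsubst phi)) U q) /\
  (forall U u, In U (ran (fsubst phi)) -> is_subterm u U -> key_condition s u) /\
  (forall U u, In U (ran (fsubst phi)) -> is_subterm u U -> ~ is_destructor u).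

(* Equality modulo E is decided by normal forms for the convergent rewrite system
   obtained by orienting the equations.  When [s] is not deducible, the normal form of
   every attacker computation [U sigma] has a restricted shape ([good] below): its
   destructor nodes are irreducible, and [s] occurs only inside the plaintext of an
   encryption copied from the frame, which its nonce identifies uniquely because the
   frame encrypts probabilistically.  Replacing [s] by a closed term and renormalising
   is injective on such terms, so a test passes on phi[s/M] iff it passes on phi, for
   every closed M.  Conversely, a recipe U for [s] separates phi[s/0] from phi[s/1]
   by the test (U, 0). *)

From Stdlib Require Import List Arith Lia Relations.
Import ListNotations.

(** * Normal forms modulo E *)

Definition term_eq_dec (t u : term) : {t = u} + {t <> u}.
Proof. decide equality; apply Nat.eq_dec. Defined.

Definition proj1_nf (t : term) : term :=
  match t with Pair a _ => a | _ => Proj1 t end.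
Definition proj2_nf (t : term) : term :=
  match t with Pair _ b => b | _ => Proj2 t end.
Definition retrieve_nf (t : term) : term :=
  match t with Sign a _ => a | _ => Retrieve t end.
Definition dec_nf (t k : term) : term :=
  match t with
  | Enc a k' _ => if term_eq_dec k' k then a else Dec t k
  | _ => Dec t k
  end.
Definition deca_nf (t k : term) : term :=
  match t, k with
  | Enca a (Pub z) _, Priv z' => if term_eq_dec z z' then a else Deca t k
  | _, _ => Deca t k
  end.
Definition check_nf (a b c : term) : term :=
  match b, c with
  | Sign a' (Priv z), Pub z' =>
      if term_eq_dec a a' then if term_eq_dec z z' then ok else Check a b c
      else Check a b c
  | _, _ => Check a b c
  end.

Fixpoint norm (t : term) : term :=
  match t with
  | Var x => Var x
  | Name n => Name n
  | Cst c => Cst c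
  | Enc a b c => Enc (norm a) (norm b) (norm c)
  | Dec a b => dec_nf (norm a) (norm b)
  | Enca a b c => Enca (norm a) (norm b) (norm c)
  | Deca a b => deca_nf (norm a) (norm b)
  | Pub a => Pub (norm a)
  | Priv a => Priv (norm a)
  | Pair a b => Pair (norm a) (norm b)
  | Proj1 a => proj1_nf (norm a)
  | Proj2 a => proj2_nf (norm a)
  | Sign a b => Sign (norm a) (norm b)
  | Check a b c => check_nf (norm a) (norm b) (norm c)
  | Retrieve a => retrieve_nf (norm a)
  end.

Lemma eqE_norm t u : eqE t u -> norm t = norm u.
Proof.
  induction 1; simpl; try congruence.
  - destruct (term_eq_dec (norm z2) (norm z2)); congruence.
  - destruct (term_eq_dec (norm z2) (norm z2)); congruence.
  - destruct (term_eq_dec (norm z1) (norm z1)); [|congruence].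
    destruct (term_eq_dec (norm z2) (norm z2)); [reflexivity|congruence].
Qed.

Lemma dec_nf_eqE a b : eqE (Dec a b) (dec_nf a b).
Proof.
  destruct a; try apply eqE_refl; simpl.
  destruct (term_eq_dec a2 b) as [->|]; [apply eqE_ax_dec|apply eqE_refl].
Qed.

Lemma deca_nf_eqE a b : eqE (Deca a b) (deca_nf a b).
Proof.
  destruct a; try apply eqE_refl; destruct a2; try apply eqE_refl;
    destruct b; try apply eqE_refl; simpl.
  destruct (term_eq_dec a2 b) as [->|]; [apply eqE_ax_deca|apply eqE_refl].
Qed.

Lemma proj1_nf_eqE a : eqE (Proj1 a) (proj1_nf a).
Proof. destruct a; try apply eqE_refl; apply eqE_ax_proj1. Qed.

Lemma proj2_nf_eqE a : eqE (Proj2 a) (proj2_nf a).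
Proof. destruct a; try apply eqE_refl; apply eqE_ax_proj2. Qed.

Lemma retrieve_nf_eqE a : eqE (Retrieve a) (retrieve_nf a).
Proof. destruct a; try apply eqE_refl; apply eqE_ax_retrieve. Qed.

Lemma check_nf_eqE a b c : eqE (Check a b c) (check_nf a b c).
Proof.
  destruct b; try apply eqE_refl; destruct b2; try apply eqE_refl;
    destruct c; try apply eqE_refl; simpl.
  destruct (term_eq_dec a b1) as [->|]; [|apply eqE_refl].
  destruct (term_eq_dec b2 c) as [->|]; [apply eqE_ax_check|apply eqE_refl].
Qed.

Lemma norm_eqE t : eqE t (norm t).
Proof.
  induction t; simpl; try (constructor; assumption); try apply eqE_refl.
  - eapply eqE_trans; [apply eqE_Dec; eassumption|apply dec_nf_eqE].
  - eapply eqE_trans; [apply eqE_Deca; eassumption|apply deca_nf_eqE].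
  - eapply eqE_trans; [apply eqE_Proj1; eassumption|apply proj1_nf_eqE].
  - eapply eqE_trans; [apply eqE_Proj2; eassumption|apply proj2_nf_eqE].
  - eapply eqE_trans; [apply eqE_Check; eassumption|apply check_nf_eqE].
  - eapply eqE_trans; [apply eqE_Retrieve; eassumption|apply retrieve_nf_eqE].
Qed.

Lemma eqE_iff_norm t u : eqE t u <-> norm t = norm u.
Proof.
  split; [apply eqE_norm|intro E].
  eapply eqE_trans; [apply norm_eqE|].
  rewrite E; apply eqE_sym, norm_eqE.
Qed.

Lemma dec_nf_cases a b :
  ((forall x r, a <> Enc x b r) /\ dec_nf a b = Dec a b) \/
  exists x r, a = Enc x b r /\ dec_nf a b = x.
Proof.
  destruct a; try (left; split; [congruence|reflexivity]); simpl.
  destruct (term_eq_dec a2 b) as [->|]; [right; eauto|left; split; congruence].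
Qed.

Lemma deca_nf_cases a b :
  ((forall x z r, ~ (a = Enca x (Pub z) r /\ b = Priv z)) /\ deca_nf a b = Deca a b) \/
  exists x z r, a = Enca x (Pub z) r /\ b = Priv z /\ deca_nf a b = x.
Proof.
  destruct a; try (left; split; [intros ? ? ? []; discriminate|reflexivity]).
  destruct a2; try (left; split; [intros ? ? ? []; congruence|reflexivity]).
  destruct b; try (left; split; [intros ? ? ? []; congruence|reflexivity]).
  simpl; destruct (term_eq_dec a2 b) as [->|].
  - right; eauto 6.
  - left; split; [intros ? ? ? []; congruence|reflexivity].
Qed.

Lemma check_nf_cases a b c :
  ((forall z, ~ (b = Sign a (Priv z) /\ c = Pub z)) /\ check_nf a b c = Check a b c) \/
  exists z, b = Sign a (Priv z) /\ c = Pub z /\ check_nf a b c = ok.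
Proof.
  destruct b; try (left; split; [intros ? []; discriminate|reflexivity]).
  destruct b2; try (left; split; [intros ? []; congruence|reflexivity]).
  destruct c; try (left; split; [intros ? []; congruence|reflexivity]).
  simpl; destruct (term_eq_dec a b1) as [->|];
    [destruct (term_eq_dec b2 c) as [->|]; [right; eauto|]|];
    left; split; try reflexivity; intros ? []; congruence.
Qed.

Lemma proj1_nf_cases a :
  ((forall x y, a <> Pair x y) /\ proj1_nf a = Proj1 a) \/
  exists x y, a = Pair x y /\ proj1_nf a = x.
Proof. destruct a; try (left; split; [congruence|reflexivity]); right; eauto. Qed.

Lemma proj2_nf_cases a :
  ((forall x y, a <> Pair x y) /\ proj2_nf a = Proj2 a) \/
  exists x y, a = Pair x y /\ proj2_nf a = y.
Proof. destruct a; try (left; split; [congruence|reflexivity]); right; eauto. Qed.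

Lemma retrieve_nf_cases a :
  ((forall x y, a <> Sign x y) /\ retrieve_nf a = Retrieve a) \/
  exists x y, a = Sign x y /\ retrieve_nf a = x.
Proof. destruct a; try (left; split; [congruence|reflexivity]); right; eauto. Qed.

Definition map_args (f : term -> term) (t : term) : term :=
  match t with
  | Var x => Var x
  | Name n => Name n
  | Cst c => Cst c
  | Enc a b c => Enc (f a) (f b) (f c)
  | Dec a b => Dec (f a) (f b)
  | Enca a b c => Enca (f a) (f b) (f c)
  | Deca a b => Deca (f a) (f b)
  | Pub a => Pub (f a)
  | Priv a => Priv (f a)
  | Pair a b => Pair (f a) (f b)
  | Proj1 a => Proj1 (f a)
  | Proj2 a => Proj2 (f a)
  | Sign a b => Sign (f a) (f b)
  | Check a b c => Check (f a) (f b) (f c)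
  | Retrieve a => Retrieve (f a)
  end.

Lemma map_args_not_Pair f a :
  (forall x y, a <> Pair x y) -> forall x y, map_args f a <> Pair x y.
Proof. intros H x y; destruct a; simpl; try discriminate; now destruct (H _ _ eq_refl). Qed.

Lemma map_args_not_Sign f a :
  (forall x y, a <> Sign x y) -> forall x y, map_args f a <> Sign x y.
Proof. intros H x y; destruct a; simpl; try discriminate; now destruct (H _ _ eq_refl). Qed.

Lemma map_args_not_dec_redex f a b :
  (forall x k r, a = Enc x k r -> f k = f b -> k = b) ->
  (forall x r, a <> Enc x b r) -> forall x r, map_args f a <> Enc x (f b) r.
Proof.
  intros Hinj Hirr x r; destruct a; simpl; try discriminate.
  intros [= _ Hk _]; apply (Hirr a1 a3); f_equal; eapply Hinj; eauto.
Qed.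

Lemma map_args_not_deca_redex f a b :
  (forall x k r, a = Enca x k r -> f k = map_args f k) -> f b = map_args f b ->
  (forall x z r z', a = Enca x (Pub z) r -> b = Priv z' -> f z = f z' -> z = z') ->
  (forall x z r, ~ (a = Enca x (Pub z) r /\ b = Priv z)) ->
  forall x z r, ~ (map_args f a = Enca x (Pub z) r /\ f b = Priv z).
Proof.
  intros Hkey Hb Hinj Hirr x z r [Ha Hpriv]; destruct a; try discriminate.
  injection Ha as _ Hk _; rewrite (Hkey _ _ _ eq_refl) in Hk.
  destruct a2; try discriminate; injection Hk as Hk.
  rewrite Hb in Hpriv; destruct b; try discriminate; injection Hpriv as Hpriv.
  apply (Hirr a1 a2 a3); split; [reflexivity|].
  f_equal; symmetry; eapply Hinj; eauto; congruence.
Qed.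

Lemma map_args_not_check_redex f a b c :
  f b = map_args f b -> (forall a' k, b = Sign a' k -> f k = map_args f k) ->
  f c = map_args f c ->
  (forall a' z z', b = Sign a' (Priv z) -> c = Pub z' -> f a = f a' -> f z = f z' ->
     a = a' /\ z = z') ->
  (forall z, ~ (b = Sign a (Priv z) /\ c = Pub z)) ->
  forall z, ~ (f b = Sign (f a) (Priv z) /\ f c = Pub z).
Proof.
  intros Hb Hkey Hc Hinj Hirr z [Hsign Hpub].
  rewrite Hb in Hsign; destruct b; try discriminate; injection Hsign as Ha Hk.
  rewrite (Hkey _ _ eq_refl) in Hk; destruct b2; try discriminate; injection Hk as Hk.
  rewrite Hc in Hpub; destruct c; try discriminate; injection Hpub as Hpub.
  destruct (Hinj b1 b2 c eq_refl eq_refl) as [-> ->]; try congruence.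
  apply (Hirr c); split; reflexivity.
Qed.

Fixpoint subst_fun (f : nat -> term) (t : term) : term :=
  match t with
  | Var x => f x
  | Name n => Name n
  | Cst c => Cst c
  | Enc a b c => Enc (subst_fun f a) (subst_fun f b) (subst_fun f c)
  | Dec a b => Dec (subst_fun f a) (subst_fun f b)
  | Enca a b c => Enca (subst_fun f a) (subst_fun f b) (subst_fun f c)
  | Deca a b => Deca (subst_fun f a) (subst_fun f b)
  | Pub a => Pub (subst_fun f a)
  | Priv a => Priv (subst_fun f a)
  | Pair a b => Pair (subst_fun f a) (subst_fun f b)
  | Proj1 a => Proj1 (subst_fun f a)
  | Proj2 a => Proj2 (subst_fun f a)
  | Sign a b => Sign (subst_fun f a) (subst_fun f b)
  | Check a b c => Check (subst_fun f a) (subst_fun f b) (subst_fun f c)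
  | Retrieve a => Retrieve (subst_fun f a)
  end.

Lemma subst_fun_Var t : subst_fun Var t = t.
Proof. induction t; simpl; congruence. Qed.

Lemma subst1_subst_fun sg f t :
  subst1 sg (subst_fun f t) = subst_fun (fun y => subst1 sg (f y)) t.
Proof. induction t; simpl; congruence. Qed.

Lemma iter_subst1_subst_fun sg k t :
  Nat.iter k (subst1 sg) t = subst_fun (fun y => Nat.iter k (subst1 sg) (Var y)) t.
Proof.
  induction k; simpl.
  - symmetry; apply subst_fun_Var.
  - rewrite IHk; apply subst1_subst_fun.
Qed.

Definition resolve (sg : subst) (x : nat) : term := apply_subst sg (Var x).

Lemma apply_subst_resolve sg t : apply_subst sg t = subst_fun (resolve sg) t.
Proof. apply iter_subst1_subst_fun. Qed.

Lemma vars_subst_fun f t y :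
  In y (vars (subst_fun f t)) -> exists z, In z (vars t) /\ In y (vars (f z)).
Proof.
  induction t; simpl; intro H; repeat rewrite in_app_iff in *;
    try contradiction; eauto;
    repeat match goal with
    | H : _ \/ _ |- _ => destruct H as [H|H]
    | IH : In y _ -> exists _, _, H : In y _ |- _ =>
        destruct (IH H) as (z & ? & ?); clear IH
    end; exists z; repeat rewrite in_app_iff; auto.
Qed.

Lemma lookup_None sg x : lookup sg x = None <-> ~ In x (dom sg).
Proof.
  induction sg as [|[y t] sg IH]; simpl; [tauto|].
  destruct (Nat.eqb_spec x y) as [->|Hxy]; [split; [discriminate|tauto]|].
  rewrite IH; intuition congruence.
Qed.

Lemma lookup_Some_dom sg x t : lookup sg x = Some t -> In x (dom sg).
Proof.
  intro H; destruct (in_dec Nat.eq_dec x (dom sg)) as [|Hx]; auto.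
  apply lookup_None in Hx; congruence.
Qed.

Lemma lookup_Some_ran sg x t : lookup sg x = Some t -> In t (ran sg).
Proof.
  induction sg as [|[y u] sg IH]; simpl; [discriminate|].
  destruct (x =? y); [intros [= ->]|]; auto.
Qed.

Fixpoint dep_chain (sg : subst) (l : list nat) : Prop :=
  match l with
  | a :: (b :: _) as l' => dep sg a b /\ dep_chain sg l'
  | _ => True
  end.

Lemma dep_chain_clos_trans sg a l :
  dep_chain sg (a :: l) -> forall b, In b l -> clos_trans nat (dep sg) a b.
Proof.
  revert a; induction l as [|c l IH]; intros a H b Hb; [contradiction|].
  destruct H as [Hac Hc], Hb as [<-|Hb]; [now apply t_step|].
  eapply t_trans; [apply t_step, Hac|now apply IH].
Qed.

Lemma dep_chain_NoDup sg l : acyclic sg -> dep_chain sg l -> NoDup l.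
Proof.
  intro Hac; induction l as [|a l IH]; intro H; constructor.
  - intro Ha; apply (Hac a); eapply dep_chain_clos_trans; eauto.
  - apply IH; destruct l; [exact I|apply H].
Qed.

Lemma dep_chain_dom sg a l :
  dep_chain sg (a :: l) -> In a (dom sg) -> forall z, In z (a :: l) -> In z (dom sg).
Proof.
  revert a; induction l as [|b l IH]; intros a H Ha z [<-|Hz]; auto; [contradiction|].
  destruct H as [[_ (t & Hb & _)] H].
  apply (IH b H (lookup_Some_dom _ _ _ Hb) z Hz).
Qed.

Lemma dep_chain_length sg a l :
  acyclic sg -> dep_chain sg (a :: l) -> In a (dom sg) -> length (a :: l) <= length sg.
Proof.
  intros Hac H Ha. replace (length sg) with (length (dom sg)) by apply length_map.
  apply NoDup_incl_length; [eapply dep_chain_NoDup; eauto|].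
  intros z Hz; eapply dep_chain_dom; eauto.
Qed.

Lemma iter_subst1_dep_chain sg k t y :
  In y (vars (Nat.iter k (subst1 sg) t)) -> In y (dom sg) ->
  exists l, length l = k /\ dep_chain sg (y :: l).
Proof.
  revert y; induction k as [|k IH]; intros y H Hy; [exists []; split; [reflexivity|exact I]|].
  simpl in H; rewrite <- (subst_fun_Var (Nat.iter k (subst1 sg) t)), subst1_subst_fun in H.
  apply vars_subst_fun in H as (z & Hz & Hyz); simpl in Hyz.
  destruct (lookup sg z) as [u|] eqn:Hlz.
  - destruct (IH z Hz (lookup_Some_dom _ _ _ Hlz)) as (l & <- & Hl).
    exists (z :: l); split; [reflexivity|].
    split; [split; [exact Hy|eauto]|exact Hl].
  - destruct Hyz as [->|[]]; apply lookup_None in Hlz; contradiction.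
Qed.

Lemma subst_fun_ext f g t :
  (forall y, In y (vars t) -> f y = g y) -> subst_fun f t = subst_fun g t.
Proof.
  induction t; simpl; intro H; auto;
    f_equal; (apply IHt || apply IHt1 || apply IHt2 || apply IHt3);
    intros y Hy; apply H; repeat rewrite in_app_iff; auto.
Qed.

Lemma subst1_id sg t : (forall y, In y (vars t) -> ~ In y (dom sg)) -> subst1 sg t = t.
Proof.
  intro H; rewrite <- (subst_fun_Var t), subst1_subst_fun.
  apply subst_fun_ext; intros y Hy; simpl.
  rewrite (proj2 (lookup_None sg y)); [reflexivity|now apply H].
Qed.

Lemma apply_subst_fixpoint sg t :
  acyclic sg -> subst1 sg (apply_subst sg t) = apply_subst sg t.
Proof.
  intro Hac; apply subst1_id; intros y Hy Hdom.
  destruct (iter_subst1_dep_chain _ _ _ _ Hy Hdom) as (l & Hl & Hc).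
  pose proof (dep_chain_length _ _ _ Hac Hc Hdom); simpl in *; lia.
Qed.

Lemma resolve_unfold sg x u :
  acyclic sg -> lookup sg x = Some u -> resolve sg x = subst_fun (resolve sg) u.
Proof.
  intros Hac Hx; rewrite <- apply_subst_resolve; unfold resolve.
  rewrite <- (apply_subst_fixpoint sg (Var x) Hac); unfold apply_subst.
  rewrite <- Nat.iter_succ, Nat.iter_succ_r; simpl; rewrite Hx; reflexivity.
Qed.

Lemma resolve_not_dom sg x : ~ In x (dom sg) -> resolve sg x = Var x.
Proof.
  intro Hx; apply lookup_None in Hx; unfold resolve, apply_subst.
  induction (length sg) as [|n IH]; simpl; [reflexivity|].
  rewrite IH; simpl; rewrite Hx; reflexivity.
Qed.

Lemma dep_chain_Acc sg : acyclic sg -> forall m x l,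
  dep_chain sg (x :: l) -> In x (dom sg) -> length sg < length (x :: l) + m ->
  Acc (dep sg) x.
Proof.
  intro Hac; induction m as [|m IH]; intros x l Hc Hx Hlen.
  - pose proof (dep_chain_length _ _ _ Hac Hc Hx); lia.
  - constructor; intros y Hy.
    apply (IH y (x :: l)); [split; assumption|apply Hy|simpl in *; lia].
Qed.

Lemma dep_well_founded sg : acyclic sg -> well_founded (dep sg).
Proof.
  intros Hac x; constructor; intros y Hy.
  apply (dep_chain_Acc sg Hac (length sg) y []); [exact I|apply Hy|simpl; lia].
Qed.

Lemma resolve_rect sg (P : term -> Prop) : acyclic sg ->
  (forall x, ~ In x (dom sg) -> P (Var x)) ->
  (forall x u, lookup sg x = Some u ->
     (forall y, In y (vars u) -> P (resolve sg y)) -> P (resolve sg x)) ->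
  forall x, P (resolve sg x).
Proof.
  intros Hac Hvar Hstep x; induction (dep_well_founded sg Hac x) as [x _ IH].
  destruct (lookup sg x) as [u|] eqn:Hx.
  - apply (Hstep x u Hx); intros y Hy.
    destruct (in_dec Nat.eq_dec y (dom sg)) as [Hdom|Hdom].
    + apply IH; split; eauto.
    + rewrite resolve_not_dom by assumption; apply Hvar, Hdom.
  - apply lookup_None in Hx; rewrite resolve_not_dom by assumption; apply Hvar, Hx.
Qed.

Definition repl_subst (s : nat) (M : term) (sg : subst) : subst :=
  map (fun p => (fst p, repl s M (snd p))) sg.

Lemma fsubst_frame_repl phi s M : fsubst (frame_repl phi s M) = repl_subst s M (fsubst phi).
Proof. reflexivity. Qed.

Lemma fdom_frame_repl phi s M : fdom (frame_repl phi s M) = fdom phi.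
Proof. unfold fdom, dom; simpl; rewrite map_map; reflexivity. Qed.

Lemma repl_not_in s M t : ~ In s (names t) -> repl s M t = t.
Proof.
  induction t; simpl; intro H; repeat rewrite in_app_iff in H;
    try (f_equal; tauto).
  destruct (Nat.eqb_spec n s); [tauto|reflexivity].
Qed.

Lemma repl_eqE s M t u : eqE t u -> eqE (repl s M t) (repl s M u).
Proof. induction 1; simpl; solve [econstructor; eauto]. Qed.

Lemma subst1_repl s M sg t :
  closed M -> subst1 (repl_subst s M sg) (repl s M t) = repl s M (subst1 sg t).
Proof.
  intro HM; induction t; simpl; try congruence.
  - assert (Hlookup : lookup (repl_subst s M sg) x = option_map (repl s M) (lookup sg x)).
    { induction sg as [|[y u] sg IH]; simpl; [reflexivity|destruct (x =? y); auto]. }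
    rewrite Hlookup; destruct (lookup sg x); reflexivity.
  - destruct (n =? s); [|reflexivity].
    apply subst1_id; unfold closed in HM; rewrite HM; contradiction.
Qed.

Lemma apply_subst_repl s M sg t : closed M -> ~ In s (names t) ->
  apply_subst (repl_subst s M sg) t = repl s M (apply_subst sg t).
Proof.
  intros HM Ht; unfold apply_subst, repl_subst at 1; rewrite length_map.
  rewrite <- (repl_not_in s M t Ht) at 1.
  induction (length sg) as [|k IH]; simpl; [reflexivity|].
  rewrite IH; apply subst1_repl, HM.
Qed.

Inductive recipe (phi : frame) : term -> Prop :=
| recipe_Var x : In x (fdom phi) -> recipe phi (Var x)
| recipe_Name m : ~ In m (fnames phi) -> recipe phi (Name m)
| recipe_Cst c : recipe phi (Cst c)
| recipe_Enc a b c : recipe phi a -> recipe phi b -> recipe phi c -> recipe phi (Enc a b c)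
| recipe_Dec a b : recipe phi a -> recipe phi b -> recipe phi (Dec a b)
| recipe_Enca a b c : recipe phi a -> recipe phi b -> recipe phi c -> recipe phi (Enca a b c)
| recipe_Deca a b : recipe phi a -> recipe phi b -> recipe phi (Deca a b)
| recipe_Pub a : recipe phi a -> recipe phi (Pub a)
| recipe_Pair a b : recipe phi a -> recipe phi b -> recipe phi (Pair a b)
| recipe_Proj1 a : recipe phi a -> recipe phi (Proj1 a)
| recipe_Proj2 a : recipe phi a -> recipe phi (Proj2 a)
| recipe_Sign a b : recipe phi a -> recipe phi b -> recipe phi (Sign a b)
| recipe_Check a b c : recipe phi a -> recipe phi b -> recipe phi c -> recipe phi (Check a b c)
| recipe_Retrieve a : recipe phi a -> recipe phi (Retrieve a).

Lemma recipe_iff phi U :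
  recipe phi U <-> public phi U /\ (forall x, In x (vars U) -> In x (fdom phi)).
Proof.
  unfold public, public_wrt; split.
  - induction 1; simpl; repeat split; intros;
      repeat match goal with
      | H : _ /\ _ |- _ => destruct H
      | H : In _ (_ ++ _) |- _ => apply in_app_or in H
      | H : _ \/ _ |- _ => destruct H
      | H : has_priv _ = false |- _ => rewrite H
      end; subst; auto; contradiction.
  - induction U; simpl; intros ((Hnames & Hpriv) & Hvars); try discriminate;
      repeat rewrite Bool.orb_false_iff in Hpriv;
      constructor; auto;
      match goal with IH : _ -> recipe _ ?u |- recipe _ ?u => apply IH end;
      repeat split; try tauto; intros; (apply Hnames || apply Hvars);
      repeat rewrite in_app_iff; auto.
Qed.

Lemma recipe_deducible phi U : recipe phi U -> deducible phi (apply_subst (fsubst phi) U).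
Proof.
  induction 1; [now apply ded_var|..]; rewrite !apply_subst_resolve in *; simpl;
    constructor; assumption.
Qed.

Lemma deducible_recipe phi t :
  deducible phi t -> exists U, recipe phi U /\ eqE (apply_subst (fsubst phi) U) t.
Proof.
  induction 1;
    repeat match goal with H : exists _, _ /\ _ |- _ => destruct H as (? & ? & ?) end;
    [ exists (Var x); split; [now constructor|apply eqE_refl]
    | exists (Name m); split; [now constructor|rewrite apply_subst_resolve; apply eqE_refl]
    | exists (Cst c); split; [now constructor|rewrite apply_subst_resolve; apply eqE_refl]
    | .. ].
  all: match goal with
    | _ : recipe _ ?u, _ : eqE (apply_subst _ ?u) ?t, _ : eqE ?t ?t'
      |- exists U, _ /\ eqE _ ?t' =>
        exists u; split; [assumption|eapply eqE_trans; eassumption]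
    | _ : eqE (apply_subst _ ?u1) ?a, _ : eqE (apply_subst _ ?u2) ?b,
      _ : eqE (apply_subst _ ?u3) ?c |- exists U, _ /\ eqE _ (?C ?a ?b ?c) =>
        exists (C u1 u2 u3)
    | _ : eqE (apply_subst _ ?u1) ?a, _ : eqE (apply_subst _ ?u2) ?b
      |- exists U, _ /\ eqE _ (?C ?a ?b) => exists (C u1 u2)
    | _ : eqE (apply_subst _ ?u1) ?a |- exists U, _ /\ eqE _ (?C ?a) => exists (C u1)
    end.
  all: split; [constructor; assumption|].
  all: rewrite apply_subst_resolve; simpl; rewrite <- !apply_subst_resolve;
    constructor; assumption.
Qed.

Lemma recipe_names phi U s : In s (fnames phi) -> recipe phi U -> ~ In s (names U).
Proof. intros Hs HU Hin; apply recipe_iff in HU; apply (proj1 (proj1 HU) s Hin Hs). Qed.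

Lemma deducible_distinguishes_repl phi s :
  In s (fnames phi) -> deducible phi (Name s) ->
  ~ stat_equiv (frame_repl phi s (Cst 0)) (frame_repl phi s (Cst 1)).
Proof.
  intros Hs Hded [_ Hequiv].
  destruct (deducible_recipe _ _ Hded) as (U & HU & HUs).
  assert (Hrepl : forall c,
             eqE (apply_subst (fsubst (frame_repl phi s (Cst c))) U) (Cst c)).
  { intro c; rewrite fsubst_frame_repl, apply_subst_repl.
    - apply (repl_eqE s (Cst c)) in HUs; simpl in HUs; rewrite Nat.eqb_refl in HUs.
      exact HUs.
    - reflexivity.
    - eapply recipe_names; eauto. }
  apply recipe_iff in HU as [HUpub HUvars].
  assert (Hpub0 : public phi (Cst 0)) by (split; [contradiction|reflexivity]).
  assert (H01 : passes (frame_repl phi s (Cst 1)) U (Cst 0)).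
  { apply (Hequiv U (Cst 0)); try assumption.
    - rewrite fdom_frame_repl; exact HUvars.
    - intros ? [].
    - unfold passes; rewrite (apply_subst_resolve _ (Cst 0)); apply Hrepl. }
  unfold passes in H01; rewrite (apply_subst_resolve _ (Cst 0)) in H01.
  assert (H10 := eqE_trans _ _ _ (eqE_sym _ _ (Hrepl 1)) H01).
  apply eqE_norm in H10; simpl in H10; discriminate.
Qed.

(** * Replacement is injective on good terms *)

Fixpoint size (t : term) : nat :=
  match t with
  | Var _ | Name _ | Cst _ => 1
  | Enc a b c | Enca a b c | Check a b c => S (size a + size b + size c)
  | Dec a b | Deca a b | Pair a b | Sign a b => S (size a + size b)
  | Pub a | Priv a | Proj1 a | Proj2 a | Retrieve a => S (size a)
  end.

Lemma size_pos t : 1 <= size t.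
Proof. destruct t; simpl; lia. Qed.

Definition rnd_of (t : term) : option nat :=
  match t with Enc _ _ (Name r) | Enca _ _ (Name r) => Some r | _ => None end.

Definition nonce (sg : subst) (r : nat) : Prop :=
  exists U q E, In U (ran sg) /\ subterm_at U q = Some E /\ rnd_of E = Some r.

Definition nonces_unique (sg : subst) : Prop :=
  forall U q E U' q' E' r, In U (ran sg) -> In U' (ran sg) ->
    subterm_at U q = Some E -> subterm_at U' q' = Some E' ->
    rnd_of E = Some r -> rnd_of E' = Some r -> E = E'.

Section GoodTerms.

Variables (sg : subst) (s : nat).

Inductive good : term -> Prop :=
| good_frame_Enc U q m k r :
    In U (ran sg) -> subterm_at U q = Some (Enc m k (Name r)) -> r <> s ->
    good (subst_fun (resolve sg) k) ->
    good (Enc (subst_fun (resolve sg) m) (subst_fun (resolve sg) k) (Name r))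
| good_frame_Enca U q m k r :
    In U (ran sg) -> subterm_at U q = Some (Enca m k (Name r)) -> r <> s ->
    good (subst_fun (resolve sg) k) ->
    good (Enca (subst_fun (resolve sg) m) (subst_fun (resolve sg) k) (Name r))
| good_Var x : good (Var x)
| good_Cst c : good (Cst c)
| good_Name n : n <> s -> ~ nonce sg n -> good (Name n)
| good_Enc a b c : good a -> good b -> good c -> good (Enc a b c)
| good_Enca a b c : good a -> good b -> good c -> good (Enca a b c)
| good_Pub a : good a -> good (Pub a)
| good_Priv a : good a -> good (Priv a)
| good_Pair a b : good a -> good b -> good (Pair a b)
| good_Sign a b : good a -> good b -> good (Sign a b)
| good_Dec a b : good a -> good b -> (forall x r, a <> Enc x b r) -> good (Dec a b)
| good_Deca a b : good a -> good b ->
    (forall x z r, ~ (a = Enca x (Pub z) r /\ b = Priv z)) -> good (Deca a b)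
| good_Proj1 a : good a -> (forall x y, a <> Pair x y) -> good (Proj1 a)
| good_Proj2 a : good a -> (forall x y, a <> Pair x y) -> good (Proj2 a)
| good_Check a b c : good a -> good b -> good c ->
    (forall z, ~ (b = Sign a (Priv z) /\ c = Pub z)) -> good (Check a b c)
| good_Retrieve a : good a -> (forall x y, a <> Sign x y) -> good (Retrieve a).

Lemma good_Name_inv n : good (Name n) -> n <> s /\ ~ nonce sg n.
Proof. inversion 1; auto. Qed.

Lemma good_enc_inv C a1 a2 a3 : C = Enc \/ C = Enca -> good (C a1 a2 a3) ->
  good a2 /\
  ((good a1 /\ good a3) \/
   exists U q m k r, In U (ran sg) /\ subterm_at U q = Some (C m k (Name r)) /\ r <> s /\
     a1 = subst_fun (resolve sg) m /\ a2 = subst_fun (resolve sg) k /\ a3 = Name r).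
Proof.
  intros [-> | ->]; inversion 1; subst; split; auto; right; do 5 eexists; eauto 7.
Qed.

Variable M : term.
Hypothesis Huniq : nonces_unique sg.

Definition repl_nf (t : term) : term := norm (repl s M t).

Lemma repl_nf_Name n : n <> s -> repl_nf (Name n) = Name n.
Proof. intro Hn; unfold repl_nf; simpl; rewrite (proj2 (Nat.eqb_neq n s) Hn); reflexivity. Qed.

(* Renormalising after the replacement rewrites nothing at the root of a good term;
   this and injectivity are proved together by induction on size. *)
Definition repl_nf_root_upto (n : nat) : Prop :=
  forall t, size t <= n -> good t -> repl_nf t = map_args repl_nf t.

Definition repl_nf_inj_upto (n : nat) : Prop :=
  forall a b, size a + size b <= n -> good a -> good b -> repl_nf a = repl_nf b -> a = b.

Section InductionStep.

Variable n : nat.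
Hypotheses (Hroot : repl_nf_root_upto n) (Hinj : repl_nf_inj_upto n).

Lemma repl_nf_Dec a b : size (Dec a b) <= S n -> good a -> good b ->
  (forall x r, a <> Enc x b r) -> repl_nf (Dec a b) = Dec (repl_nf a) (repl_nf b).
Proof.
  intros Hsize Ga Gb Hirr; simpl in Hsize.
  change (dec_nf (repl_nf a) (repl_nf b) = Dec (repl_nf a) (repl_nf b)).
  rewrite (Hroot a) by (assumption || lia).
  destruct (dec_nf_cases (map_args repl_nf a) (repl_nf b))
    as [[_ ->]|(x & r & Hred & _)]; [reflexivity|exfalso].
  revert Hred; apply map_args_not_dec_redex; [|exact Hirr].
  intros x' k r' -> Hk; simpl in Hsize.
  apply (Hinj k b); auto; [lia|].
  exact (proj1 (good_enc_inv Enc x' k r' (or_introl eq_refl) Ga)).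
Qed.

Lemma repl_nf_Deca a b : size (Deca a b) <= S n -> good a -> good b ->
  (forall x z r, ~ (a = Enca x (Pub z) r /\ b = Priv z)) ->
  repl_nf (Deca a b) = Deca (repl_nf a) (repl_nf b).
Proof.
  intros Hsize Ga Gb Hirr; simpl in Hsize.
  change (deca_nf (repl_nf a) (repl_nf b) = Deca (repl_nf a) (repl_nf b)).
  rewrite (Hroot a) by (assumption || lia).
  destruct (deca_nf_cases (map_args repl_nf a) (repl_nf b))
    as [[_ ->]|(x & z & r & Hred1 & Hred2 & _)]; [reflexivity|exfalso].
  assert (Gkey : forall x k r, a = Enca x k r -> good k /\ size k < size a).
  { intros x' k r' ->; simpl; split; [|lia].
    exact (proj1 (good_enc_inv Enca x' k r' (or_intror eq_refl) Ga)). }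
  eapply (map_args_not_deca_redex repl_nf a b); [..|exact Hirr|split; eassumption].
  - intros x' k r' Ha; destruct (Gkey _ _ _ Ha); apply Hroot; auto; lia.
  - apply Hroot; auto; lia.
  - intros x' z' r' w Ha -> Hzw; destruct (Gkey _ _ _ Ha) as [Gz Hz].
    apply Hinj; simpl in *; [lia|inversion Gz; assumption|inversion Gb; assumption|exact Hzw].
Qed.

Lemma repl_nf_Check a b c : size (Check a b c) <= S n -> good a -> good b -> good c ->
  (forall z, ~ (b = Sign a (Priv z) /\ c = Pub z)) ->
  repl_nf (Check a b c) = Check (repl_nf a) (repl_nf b) (repl_nf c).
Proof.
  intros Hsize Ga Gb Gc Hirr; simpl in Hsize.
  change (check_nf (repl_nf a) (repl_nf b) (repl_nf c) =
          Check (repl_nf a) (repl_nf b) (repl_nf c)).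
  destruct (check_nf_cases (repl_nf a) (repl_nf b) (repl_nf c))
    as [[_ ->]|(z & Hred1 & Hred2 & _)]; [reflexivity|exfalso].
  assert (Gsign : forall a' k, b = Sign a' k -> good a' /\ good k)
    by (intros a' k ->; inversion Gb; auto).
  eapply (map_args_not_check_redex repl_nf a b c); [..|exact Hirr|split; eassumption].
  - apply Hroot; auto; lia.
  - intros a' k ->; simpl in Hsize; apply Hroot; [lia|apply (Gsign a' k eq_refl)].
  - apply Hroot; auto; lia.
  - intros a' z' w -> -> Ha Hz; simpl in Hsize.
    destruct (Gsign a' (Priv z') eq_refl) as [Ga' Gz].
    split; apply Hinj; auto; [lia|lia|inversion Gz; assumption|inversion Gc; assumption].
Qed.

Lemma repl_nf_root_step : repl_nf_root_upto (S n).
Proof.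
  intros t Hsize Gt.
  destruct Gt as [| | | | n' Hn' _ | | | | | | |a b Ga Gb Hirr|a b Ga Gb Hirr|a Ga Hirr
                  |a Ga Hirr|a b c Ga Gb Gc Hirr|a Ga Hirr];
    try reflexivity.
  - now apply repl_nf_Name.
  - now apply repl_nf_Dec.
  - now apply repl_nf_Deca.
  - change (proj1_nf (repl_nf a) = Proj1 (repl_nf a)).
    rewrite (Hroot a) by (assumption || simpl in Hsize; lia).
    destruct (proj1_nf_cases (map_args repl_nf a)) as [[_ ->]|(x & y & Hred & _)];
      [reflexivity|exfalso; exact (map_args_not_Pair _ _ Hirr _ _ Hred)].
  - change (proj2_nf (repl_nf a) = Proj2 (repl_nf a)).
    rewrite (Hroot a) by (assumption || simpl in Hsize; lia).
    destruct (proj2_nf_cases (map_args repl_nf a)) as [[_ ->]|(x & y & Hred & _)];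
      [reflexivity|exfalso; exact (map_args_not_Pair _ _ Hirr _ _ Hred)].
  - now apply repl_nf_Check.
  - change (retrieve_nf (repl_nf a) = Retrieve (repl_nf a)).
    rewrite (Hroot a) by (assumption || simpl in Hsize; lia).
    destruct (retrieve_nf_cases (map_args repl_nf a)) as [[_ ->]|(x & y & Hred & _)];
      [reflexivity|exfalso; exact (map_args_not_Sign _ _ Hirr _ _ Hred)].
Qed.

Lemma good_repl_nf_Name t r : size t <= n -> good t -> repl_nf t = Name r -> t = Name r.
Proof.
  intros Hsize Gt Ht; rewrite Hroot in Ht by assumption.
  destruct t; simpl in Ht; congruence.
Qed.

Lemma repl_nf_enc_inj C a1 a2 a3 b1 b2 b3 : C = Enc \/ C = Enca ->
  size (C a1 a2 a3) + size (C b1 b2 b3) <= S n ->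
  good (C a1 a2 a3) -> good (C b1 b2 b3) ->
  repl_nf a1 = repl_nf b1 -> repl_nf a2 = repl_nf b2 -> repl_nf a3 = repl_nf b3 ->
  C a1 a2 a3 = C b1 b2 b3.
Proof.
  intros HC Hsize Ga Gb E1 E2 E3.
  assert (Hsz : size a1 + size b1 <= n /\ size a2 + size b2 <= n /\ size a3 + size b3 <= n)
    by (destruct HC; subst; simpl in Hsize; lia).
  pose proof (size_pos a3); pose proof (size_pos b3).
  assert (Hnonce : forall U q m k r, In U (ran sg) -> subterm_at U q = Some (C m k (Name r)) ->
                     nonce sg r)
    by (intros; do 3 eexists; split; [|split]; eauto; destruct HC; subst; reflexivity).
  destruct (good_enc_inv C a1 a2 a3 HC Ga)
    as [Ga2 [[Ga1 Ga3]|(U & q & m & k & r & HU & Hq & Hr & -> & -> & ->)]];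
  destruct (good_enc_inv C b1 b2 b3 HC Gb)
    as [Gb2 [[Gb1 Gb3]|(U' & q' & m' & k' & r' & HU' & Hq' & Hr' & -> & -> & ->)]].
  - f_equal; apply Hinj; tauto.
  - rewrite repl_nf_Name in E3 by assumption.
    apply good_repl_nf_Name in E3 as ->; [|lia|assumption].
    exfalso; apply (good_Name_inv _ Ga3); eauto.
  - rewrite repl_nf_Name in E3 by assumption; symmetry in E3.
    apply good_repl_nf_Name in E3 as ->; [|lia|assumption].
    exfalso; apply (good_Name_inv _ Gb3); eauto.
  - rewrite !repl_nf_Name in E3 by assumption; injection E3 as <-.
    assert (Hrnd : forall m k, rnd_of (C m k (Name r)) = Some r)
      by (destruct HC; subst; reflexivity).
    pose proof (Huniq U q _ U' q' _ r HU HU' Hq Hq' (Hrnd m k) (Hrnd m' k')) as Heq.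
    destruct HC; subst C; injection Heq as -> ->; reflexivity.
Qed.

Lemma repl_nf_inj_step : repl_nf_inj_upto (S n).
Proof.
  intros a b Hsize Ga Gb E.
  pose proof (size_pos a); pose proof (size_pos b).
  rewrite (Hroot a), (Hroot b) in E by (assumption || lia).
  destruct a, b; simpl in E; try discriminate; injection E; intros; subst; try reflexivity.
  all: lazymatch goal with
  | |- Enc _ _ _ = _ => apply (repl_nf_enc_inj Enc); auto
  | |- Enca _ _ _ = _ => apply (repl_nf_enc_inj Enca); auto
  | _ => simpl in Hsize; inversion Ga; inversion Gb; subst; f_equal; apply Hinj;
         (assumption || lia)
  end.
Qed.

End InductionStep.

Lemma repl_nf_good_inj a b : good a -> good b -> repl_nf a = repl_nf b -> a = b.
Proof.
  assert (Hall : forall n, repl_nf_root_upto n /\ repl_nf_inj_upto n).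
  { induction n as [|n [Hroot Hinj]].
    - split; intros t; [|intros u]; pose proof (size_pos t); lia.
    - split; [apply repl_nf_root_step|apply repl_nf_inj_step]; assumption. }
  intros Ga Gb; apply (proj2 (Hall (size a + size b))); auto.
Qed.

End GoodTerms.

(** * Attacker computations normalise to good terms *)

Fixpoint no_destructor (t : term) : bool :=
  match t with
  | Var _ | Name _ | Cst _ => true
  | Enc a b c | Enca a b c => no_destructor a && no_destructor b && no_destructor c
  | Pub a | Priv a => no_destructor a
  | Pair a b | Sign a b => no_destructor a && no_destructor b
  | Dec _ _ | Deca _ _ | Proj1 _ | Proj2 _ | Check _ _ _ | Retrieve _ => false
  end.

Lemma norm_no_destructor t : no_destructor t = true -> norm t = t.
Proof.
  induction t; simpl; intro H; repeat rewrite Bool.andb_true_iff in H;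
    try discriminate; f_equal; tauto.
Qed.

Lemma no_destructor_subterms t :
  (forall p u, subterm_at t p = Some u -> ~ is_destructor u) -> no_destructor t = true.
Proof.
  induction t; intro H; simpl; auto;
    try (exfalso; apply (H [] _ eq_refl); exact I);
    repeat rewrite Bool.andb_true_iff; repeat split;
    first [apply IHt1|apply IHt2|apply IHt3|apply IHt];
    intros p u Hp; solve [ apply (H (1 :: p)); assumption | apply (H (2 :: p)); assumption
                         | apply (H (3 :: p)); assumption ].
Qed.

Lemma no_destructor_subst_fun f t : no_destructor t = true ->
  (forall y, In y (vars t) -> no_destructor (f y) = true) ->
  no_destructor (subst_fun f t) = true.
Proof.
  induction t; simpl; intros Ht Hf; repeat rewrite Bool.andb_true_iff in *; auto;
    repeat split; try discriminate;
    (apply IHt || apply IHt1 || apply IHt2 || apply IHt3); try tauto;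
    intros y Hy; apply Hf; repeat rewrite in_app_iff; auto.
Qed.

Lemma subterm_at_app t p q : subterm_at t (p ++ q) =
  match subterm_at t p with Some u => subterm_at u q | None => None end.
Proof.
  revert t; induction p as [|[|i] p IH]; intro t; simpl; [reflexivity..|].
  destruct (nth_error (args t) i); auto.
Qed.

Lemma rnd_of_Some E r : rnd_of E = Some r ->
  is_encryption E /\ subterm_at E [3] = Some (Name r).
Proof.
  destruct E as [| | | | | | | | | | | | | |]; simpl; try discriminate;
    match goal with |- context [match ?t with _ => _ end] => destruct t end;
    try discriminate; intros [= ->]; split; easy.
Qed.

Section WellFormedFrame.

Variables (phi : frame) (s : nat).
Hypotheses (Hac : acyclic (fsubst phi)) (Hs : In s (fnames phi)) (Hwf : well_formed phi s).

Local Notation sg := (fsubst phi).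
Local Notation th := (subst_fun (resolve (fsubst phi))).

Definition nonce_position (U : term) (p : list nat) : Prop :=
  exists q E, p = q ++ [3] /\ subterm_at U q = Some E /\ is_encryption E.

Definition frame_subterm (V : term) : Prop :=
  exists U p, In U (ran sg) /\ subterm_at U p = Some V /\ ~ nonce_position U p.

Lemma frame_subterm_at U p i W : In U (ran sg) -> subterm_at U (p ++ [S i]) = Some W ->
  i <> 2 -> frame_subterm W.
Proof.
  intros HU Hp Hi; exists U, (p ++ [S i]); repeat split; auto.
  intros (q & E & Heq & _); apply app_inj_tail in Heq; lia.
Qed.

Lemma frame_subterm_arg V i W : frame_subterm V -> nth_error (args V) i = Some W ->
  i <> 2 -> frame_subterm W.
Proof.
  intros (U & p & HU & Hp & _) HW; apply (frame_subterm_at U p); auto.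
  rewrite subterm_at_app, Hp; simpl; rewrite HW; reflexivity.
Qed.

Lemma frame_enc_nonce U p E : In U (ran sg) -> subterm_at U p = Some E -> is_encryption E ->
  exists r, subterm_at E [3] = Some (Name r) /\ In r (fnames phi) /\ r <> s.
Proof.
  intros HU Hp HE; destruct (proj1 Hwf U p E HU Hp HE) as [(r & Hr & Hin) _].
  rewrite subterm_at_app, Hp in Hr; apply in_remove in Hin; eauto.
Qed.

Lemma nonce_restricted r : nonce sg r -> In r (fnames phi) /\ r <> s.
Proof.
  intros (U & q & E & HU & Hq & Hrnd); apply rnd_of_Some in Hrnd as [HE HE3].
  destruct (frame_enc_nonce U q E HU Hq HE) as (r' & Hr' & ?); congruence.
Qed.

Lemma nonce_occurrence U p r U' q' E : In U (ran sg) -> subterm_at U p = Some (Name r) ->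
  In U' (ran sg) -> subterm_at U' q' = Some E -> rnd_of E = Some r ->
  exists q, p = q ++ [3] /\ subterm_at U q = Some E.
Proof.
  intros HU Hp HU' Hq' Hrnd; apply rnd_of_Some in Hrnd as [HE HE3].
  apply (proj2 (proj1 Hwf U' q' E HU' Hq' HE) (Name r) E); auto.
  rewrite subterm_at_app, Hq'; exact HE3.
Qed.

Lemma wf_nonces_unique : nonces_unique sg.
Proof.
  intros U q E U' q' E' r HU HU' Hq Hq' Hrnd Hrnd'.
  destruct (rnd_of_Some E' r Hrnd') as [_ HE3'].
  assert (Hp : subterm_at U' (q' ++ [3]) = Some (Name r))
    by (rewrite subterm_at_app, Hq'; exact HE3').
  destruct (nonce_occurrence U' _ r U q E HU' Hp HU Hq Hrnd) as (q'' & Heq & Hq'').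
  apply app_inj_tail in Heq as [-> _]; congruence.
Qed.

Lemma frame_subterm_not_nonce n : frame_subterm (Name n) -> ~ nonce sg n.
Proof.
  intros (U & p & HU & Hp & Hpos) (U' & q' & E & HU' & Hq' & Hrnd).
  destruct (nonce_occurrence U p n U' q' E HU Hp HU' Hq' Hrnd) as (q & -> & Hq).
  apply Hpos; exists q, E; repeat split; auto; apply (rnd_of_Some E n Hrnd).
Qed.

Lemma frame_subterm_key V : frame_subterm V -> key_condition s V.
Proof. intros (U & p & HU & Hp & _); apply (proj1 (proj2 Hwf) U V HU); exists p; exact Hp. Qed.

Lemma frame_subterm_not_destructor V : frame_subterm V -> ~ is_destructor V.
Proof. intros (U & p & HU & Hp & _); apply (proj2 (proj2 Hwf) U V HU); exists p; exact Hp. Qed.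

Lemma norm_resolve x : norm (resolve sg x) = resolve sg x.
Proof.
  apply norm_no_destructor; revert x.
  apply (resolve_rect sg (fun t => no_destructor t = true)); [assumption|reflexivity|].
  intros x u Hx IH; rewrite (resolve_unfold _ _ _ Hac Hx).
  apply no_destructor_subst_fun; [|exact IH].
  apply no_destructor_subterms; intros p v Hp.
  apply (proj2 (proj2 Hwf) u v); [eapply lookup_Some_ran; eauto|exists p; exact Hp].
Qed.

Hypothesis Hnd : ~ deducible phi (Name s).

Local Ltac frame_arg IH i :=
  apply IH;
  [ eapply (frame_subterm_arg _ i); [eassumption|reflexivity|lia]
  |
  | intros y Hy; match goal with H : forall y, In y _ -> _ |- _ => apply H end;
    repeat rewrite in_app_iff; tauto ].

(* The recursion never enters a plaintext: each subterm it visits is either extracted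
   by projection or retrieval, hence deducible, or lies under a key, where [s] cannot
   occur. *)
Lemma frame_subterm_good V : frame_subterm V ->
  (deducible phi (th V) \/ ~ In s (names V)) ->
  (forall y, In y (vars V) -> good sg s (resolve sg y)) ->
  good sg s (th V).
Proof.
  induction V as [x|n|c|V1 IH1 V2 IH2 V3 IH3| |V1 IH1 V2 IH2 V3 IH3| |V IH|V IH
                 |V1 IH1 V2 IH2| | |V1 IH1 V2 IH2| |];
    intros Hpos Hmode Hvars; simpl in *;
    try (exfalso; exact (frame_subterm_not_destructor _ Hpos I)).
  - apply Hvars; left; reflexivity.
  - apply good_Name; [|exact (frame_subterm_not_nonce n Hpos)].
    intros ->; destruct Hmode as [Hded|Hn]; [exact (Hnd Hded)|apply Hn; left; reflexivity].
  - apply good_Cst.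
  - pose proof Hpos as (U & p & HU & Hp & _).
    destruct (frame_enc_nonce U p _ HU Hp I) as (r & [= ->] & _ & Hrs).
    destruct (frame_subterm_key _ Hpos) as [Hk _].
    apply (good_frame_Enc sg s U p); auto.
    frame_arg IH2 1; right; exact Hk.
  - pose proof Hpos as (U & p & HU & Hp & _).
    destruct (frame_enc_nonce U p _ HU Hp I) as (r & [= ->] & _ & Hrs).
    destruct (frame_subterm_key _ Hpos) as [Hk _].
    apply (good_frame_Enca sg s U p); auto.
    frame_arg IH2 1; right; exact Hk.
  - apply good_Pub; frame_arg IH 0; right; exact (frame_subterm_key _ Hpos).
  - apply good_Priv; frame_arg IH 0; right; exact (frame_subterm_key _ Hpos).
  - rewrite in_app_iff in Hmode; apply good_Pair.
    + frame_arg IH1 0; destruct Hmode as [Hded|Hn]; [left|tauto].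
      eapply ded_eq; [apply ded_Proj1, Hded|apply eqE_ax_proj1].
    + frame_arg IH2 1; destruct Hmode as [Hded|Hn]; [left|tauto].
      eapply ded_eq; [apply ded_Proj2, Hded|apply eqE_ax_proj2].
  - rewrite in_app_iff in Hmode; apply good_Sign.
    + frame_arg IH1 0; destruct Hmode as [Hded|Hn]; [left|tauto].
      eapply ded_eq; [apply ded_Retrieve, Hded|apply eqE_ax_retrieve].
    + frame_arg IH2 1; right; exact (frame_subterm_key _ Hpos).
Qed.

Lemma resolve_good x : good sg s (resolve sg x).
Proof.
  revert x; apply (resolve_rect sg (good sg s) Hac); [intros; apply good_Var|].
  intros x u Hx IH; rewrite (resolve_unfold _ _ _ Hac Hx) in *.
  apply frame_subterm_good; [|left|exact IH].
  - exists u, []; repeat split; [eapply lookup_Some_ran; eauto|].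
    intros (q & E & Heq & _); destruct q; discriminate.
  - rewrite <- (resolve_unfold _ _ _ Hac Hx); apply ded_var; eapply lookup_Some_dom; eauto.
Qed.

Lemma good_enc_plaintext C x k r : C = Enc \/ C = Enca -> good sg s (C x k r) ->
  deducible phi x -> good sg s x.
Proof.
  intros HC Gt Hded.
  destruct (good_enc_inv sg s C x k r HC Gt)
    as [_ [[Gx _]|(U & q & m & k' & r' & HU & Hq & _ & -> & _ & _)]]; [exact Gx|].
  apply frame_subterm_good; [|left; exact Hded|intros; apply resolve_good].
  apply (frame_subterm_at U q 0); [assumption| |lia].
  rewrite subterm_at_app, Hq; destruct HC; subst; reflexivity.
Qed.

Lemma good_dec_nf a b : good sg s a -> good sg s b -> deducible phi (dec_nf a b) ->
  good sg s (dec_nf a b).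
Proof.
  intros Ga Gb Hded.
  destruct (dec_nf_cases a b) as [[Hirr E]|(x & r & -> & E)]; rewrite E in *;
    [now apply good_Dec|exact (good_enc_plaintext Enc _ _ _ (or_introl eq_refl) Ga Hded)].
Qed.

Lemma good_deca_nf a b : good sg s a -> good sg s b -> deducible phi (deca_nf a b) ->
  good sg s (deca_nf a b).
Proof.
  intros Ga Gb Hded.
  destruct (deca_nf_cases a b) as [[Hirr E]|(x & z & r & -> & _ & E)]; rewrite E in *;
    [now apply good_Deca|exact (good_enc_plaintext Enca _ _ _ (or_intror eq_refl) Ga Hded)].
Qed.

Lemma good_proj1_nf a : good sg s a -> good sg s (proj1_nf a).
Proof.
  intro Ga; destruct (proj1_nf_cases a) as [[Hirr ->]|(x & y & -> & ->)];
    [now apply good_Proj1|inversion Ga; assumption].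
Qed.

Lemma good_proj2_nf a : good sg s a -> good sg s (proj2_nf a).
Proof.
  intro Ga; destruct (proj2_nf_cases a) as [[Hirr ->]|(x & y & -> & ->)];
    [now apply good_Proj2|inversion Ga; assumption].
Qed.

Lemma good_retrieve_nf a : good sg s a -> good sg s (retrieve_nf a).
Proof.
  intro Ga; destruct (retrieve_nf_cases a) as [[Hirr ->]|(x & y & -> & ->)];
    [now apply good_Retrieve|inversion Ga; assumption].
Qed.

Lemma good_check_nf a b c :
  good sg s a -> good sg s b -> good sg s c -> good sg s (check_nf a b c).
Proof.
  intros Ga Gb Gc; destruct (check_nf_cases a b c) as [[Hirr ->]|(z & _ & _ & ->)];
    [now apply good_Check|apply good_Cst].
Qed.

Lemma recipe_deducible_nf U : recipe phi U -> deducible phi (norm (th U)).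
Proof.
  intro HU; eapply ded_eq; [apply recipe_deducible, HU|].
  rewrite apply_subst_resolve; apply norm_eqE.
Qed.

Lemma recipe_good U : recipe phi U -> good sg s (norm (th U)).
Proof.
  induction 1 as [x Hx|m Hm|c|a b c Ha IHa Hb IHb Hc IHc|a b Ha IHa Hb IHb
                  |a b c Ha IHa Hb IHb Hc IHc|a b Ha IHa Hb IHb|a Ha IHa|a b Ha IHa Hb IHb
                  |a Ha IHa|a Ha IHa|a b Ha IHa Hb IHb|a b c Ha IHa Hb IHb Hc IHc|a Ha IHa];
    simpl.
  - rewrite norm_resolve; apply resolve_good.
  - apply good_Name; [intros ->; contradiction|intro Hn; apply Hm, (nonce_restricted m Hn)].
  - apply good_Cst.
  - now apply good_Enc.
  - apply good_dec_nf; [assumption..|exact (recipe_deducible_nf _ (recipe_Dec _ _ _ Ha Hb))].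
  - now apply good_Enca.
  - apply good_deca_nf; [assumption..|exact (recipe_deducible_nf _ (recipe_Deca _ _ _ Ha Hb))].
  - now apply good_Pub.
  - now apply good_Pair.
  - now apply good_proj1_nf.
  - now apply good_proj2_nf.
  - now apply good_Sign.
  - now apply good_check_nf.
  - now apply good_retrieve_nf.
Qed.

End WellFormedFrame.

Lemma repl_nf_norm s M t : repl_nf s M (norm t) = norm (repl s M t).
Proof. apply eqE_norm, repl_eqE, eqE_sym, norm_eqE. Qed.

Lemma passes_frame_repl phi s M U V :
  acyclic (fsubst phi) -> In s (fnames phi) -> well_formed phi s ->
  ~ deducible phi (Name s) -> closed M -> recipe phi U -> recipe phi V ->
  (passes (frame_repl phi s M) U V <-> passes phi U V).
Proof.
  intros Hac Hs Hwf Hnd HM HU HV; unfold passes.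
  rewrite fsubst_frame_repl, !apply_subst_repl by (assumption || eapply recipe_names; eauto).
  split; [intro H|apply repl_eqE].
  apply eqE_iff_norm; rewrite !apply_subst_resolve in *.
  apply (repl_nf_good_inj (fsubst phi) s M (wf_nonces_unique phi s Hwf)).
  1, 2: eapply recipe_good; eassumption.
  rewrite !repl_nf_norm; apply eqE_norm, H.
Qed.

Lemma stat_equiv_frame_repl phi s M M' :
  acyclic (fsubst phi) -> In s (fnames phi) -> well_formed phi s ->
  ~ deducible phi (Name s) -> closed M -> closed M' ->
  stat_equiv (frame_repl phi s M) (frame_repl phi s M').
Proof.
  intros Hac Hs Hwf Hnd HM HM'; split.
  - intro x; rewrite !fdom_frame_repl; reflexivity.
  - intros U V HU _ HV _ HUvars HVvars; rewrite fdom_frame_repl in HUvars, HVvars.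
    assert (RU : recipe phi U) by (apply recipe_iff; split; assumption).
    assert (RV : recipe phi V) by (apply recipe_iff; split; assumption).
    rewrite !passes_frame_repl by assumption; reflexivity.
Qed.

Theorem theorem2p6 (phi : frame) (s : nat) :
  frame_ok phi ->
  In s (fnames phi) ->
  well_formed phi s ->
  (~ deducible phi (Name s) <->
   forall M M' : term,
     closed M -> public phi M -> closed M' -> public phi M' ->
     stat_equiv (frame_repl phi s M) (frame_repl phi s M')).
Proof.
  intros [_ Hac] Hs Hwf; split.
  - intros Hnd M M' HM _ HM' _; apply stat_equiv_frame_repl; assumption.
  - intros Hequiv Hded; apply (deducible_distinguishes_repl phi s Hs Hded).
    apply Hequiv; try reflexivity; split; try reflexivity; intros ? [].
Qed.
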